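(* Let $s,m$ be positive integers with $n=sm$ odd, and let $k$ be a positive integer with $\gcd(n,k)=1$. Fix $\alpha\in\mathbb{F}_{2^s}\setminus\{0\}$ and let \[ G(x)=x^{2^k+1}+\alpha+\alpha(x^{2^s}+x)^{2^n-1}=\begin{cases}x^{2^k+1}+\alpha, & x\in\mathbb{F}_{2^s},\\ x^{2^k+1}, & x\notin\mathbb{F}_{2^s},\end{cases} \] as a function $\mathbb{F}_{2^n}\to\mathbb{F}_{2^n}$. Then $\delta_{G,c}\leq 6$ for every $c\in\mathbb{F}_{2^s}\setminus\{1\}$. Moreover, if $3\nmid m$, then $\delta_{G,c}\leq 5$ for every $c\in\mathbb{F}_{2^s}\setminus\{1\}$.
   Context: For $F:\mathbb{F}_{2^n}\to\mathbb{F}_{2^n}$ and $c\in\mathbb{F}_{2^n}$, let ${}_c\Delta_F(a,b)=\#\{x\in\mathbb{F}_{2^n}: F(x+a)-cF(x)=b\}$ and the $c$-differential uniformity is $\delta_{F,c}=\max\{{}_c\Delta_F(a,b): a,b\in\mathbb{F}_{2^n},\ a\neq 0\text{ if } c=1\}$. *)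

From HB Require Import structures.
From mathcomp Require Import all_boot all_order all_algebra all_field.
Set Implicit Arguments. Unset Strict Implicit. Unset Printing Implicit Defensive.
Import GRing.Theory.
Local Open Scope ring_scope.

(* Membership in the subfield F_{2^s} of F (a finite field of char 2):
   x lies in F_{2^s} iff x^(2^s) = x. *)
Definition in_sub (F : finFieldType) (s : nat) (x : F) : bool :=
  x ^+ (2 ^ s) == x.

Definition cDelta (F : finFieldType) (f : F -> F) (c a b : F) : nat :=
  #|[set x : F | f (x + a) - c * f x == b]|.

Definition cDU (F : finFieldType) (f : F -> F) (c : F) : nat :=
  \max_(ab : F * F | (c != 1) || (ab.1 != 0)) cDelta f c ab.1 ab.2.

Definition Gfun (F : finFieldType) (n s k : nat) (alpha : F) (x : F) : F :=
  x ^+ (2 ^ k + 1) + alpha + alpha * (x ^+ (2 ^ s) + x) ^+ (2 ^ n - 1).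

From HB Require Import structures.
From mathcomp Require Import all_boot all_order all_algebra all_field.
From mathcomp Require Import ring.

Set Implicit Arguments.
Unset Strict Implicit.
Unset Printing Implicit Defensive.

Import GRing.Theory.
Local Open Scope ring_scope.

(* Write K = F_(2^s) and P(x) = (x + a)^(2^k+1) + c x^(2^k+1).  Depending on
   whether x and x + a lie in K, the equation G(x + a) - c G(x) = b reads
   P(x) = b' for a constant b' determined by b, alpha and c.  For c <> 1 such
   a Gold equation has at most three roots: fixing a root x0 and putting
   x = x0 + 1/w gives an affine equation d + A w + B w^(2^k) = 0, whose roots
   differ by roots of A X + B X^(2^k); two nonzero roots of the latter have a
   ratio fixed by x |-> x^(2^k), hence in F_2 as gcd(k, n) = 1.
   If a is in K there are two pieces, hence at most 6 roots.  If moreover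
   3 does not divide m, the Frobenius x |-> x^(2^s) permutes the roots of
   P(x) = b' for b' in K, and a root outside K would have at least 4 distinct
   conjugates (gcd(d, m) = 1 for d <= 3); so only one piece contributes.
   If a is not in K, the pieces x in K and x + a in K contribute at most one
   root each: u |-> c1 (u + a)^(2^k+1) + c2 u^(2^k+1) is injective on K, as
   applying the Frobenius and subtracting leaves w^(2^k) e = w e^(2^k) with
   w = u - v in K and e = a - a^(2^s) outside K.  This gives 1 + 1 + 3. *)

Lemma card_le_succ (T : finType) (A : {set T}) n :
  (forall x, x \in A -> #|A :\ x| <= n)%N -> (#|A| <= n.+1)%N.
Proof.
case: (set_0Vmem A) => [-> _ | [x xA] le_n]; first by rewrite cards0.
by rewrite (cardsD1 x) xA add1n ltnS le_n.
Qed.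

Section PowerFixedPoints.
Variables (R : pzSemiRingType) (p : nat) (x : R).

Lemma expr_pow_fixedM i a : x ^+ (p ^ i) = x -> x ^+ (p ^ (i * a)) = x.
Proof.
move=> fx; elim: a => [|a IHa]; first by rewrite muln0 expr1.
by rewrite mulnS expnD exprM fx IHa.
Qed.

Lemma expr_pow_fixed_gcd i j : (0 < i)%N ->
  x ^+ (p ^ i) = x -> x ^+ (p ^ j) = x -> x ^+ (p ^ gcdn i j) = x.
Proof.
move=> i_gt0 fxi fxj; have [a _ /dvdnP[b def_b]] := Bezoutl j i_gt0.
have <- : x ^+ (p ^ (a * j + gcdn i j)) = x ^+ (p ^ gcdn i j).
  by rewrite expnD exprM mulnC (expr_pow_fixedM _ fxj).
by rewrite addnC def_b mulnC (expr_pow_fixedM _ fxi).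
Qed.

End PowerFixedPoints.

Section CharTwo.
Variables (R : comNzRingType) (k : nat).
Hypothesis pcharR2 : 2 \in [pchar R].

Lemma exprD_pow2 j (x y : R) : (x + y) ^+ (2 ^ j) = x ^+ (2 ^ j) + y ^+ (2 ^ j).
Proof.
by apply: exprDn_pchar; rewrite (eq_pnat _ (pcharf_eq pcharR2)) pnatX pnat_id.
Qed.

Lemma exprB_pow2 j (x y : R) : (x - y) ^+ (2 ^ j) = x ^+ (2 ^ j) - y ^+ (2 ^ j).
Proof. by rewrite !(oppr_pchar2 pcharR2) exprD_pow2. Qed.

Definition gold (x : R) := x ^+ (2 ^ k + 1).

(* [gold (x + a) - c * gold x], written with a plus sign (characteristic 2). *)
Definition gold_cdiff (a c x : R) := gold (x + a) + c * gold x.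

Lemma goldE x : gold x = x ^+ (2 ^ k) * x.
Proof. by rewrite /gold addn1 exprSr. Qed.

Lemma gold_exprAC j x : gold x ^+ j = gold (x ^+ j).
Proof. exact: exprAC. Qed.

Lemma goldD x y :
  gold (x + y) = gold x + x ^+ (2 ^ k) * y + x * y ^+ (2 ^ k) + gold y.
Proof. by rewrite !goldE exprD_pow2; ring. Qed.

Lemma gold_cdiff_shift a c x0 z : gold_cdiff a c (x0 + z) = gold_cdiff a c x0 +
  ((1 + c) * gold z + (x0 + a + c * x0) * z ^+ (2 ^ k)
    + ((x0 + a) ^+ (2 ^ k) + c * x0 ^+ (2 ^ k)) * z).
Proof. by rewrite /gold_cdiff addrAC !goldD; ring. Qed.

End CharTwo.

Lemma expr_pow2_inj (R : idomainType) j : 2 \in [pchar R] ->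
  injective (fun x : R => x ^+ (2 ^ j)).
Proof.
move=> pcharR2 x y /= e; apply/eqP; rewrite -subr_eq0 oppr_pchar2 //.
have : (x + y) ^+ (2 ^ j) == 0 by rewrite exprD_pow2 // e addrr_pchar2.
by rewrite expf_eq0 => /andP[].
Qed.

Section FiniteFieldCharTwo.
Variables (F : finFieldType) (n : nat).
Hypothesis cardF : #|F| = (2 ^ n)%N.

Let pcharF2 : 2 \in [pchar F] := card_finPcharP cardF (isT : prime 2).

Lemma card_pow2_exp_gt0 : (0 < n)%N.
Proof. by move: (finNzRing_gt1 F); rewrite cardF; case: (n). Qed.

Lemma expf_card_pow2 (x : F) : x ^+ (2 ^ n) = x.
Proof. by rewrite -cardF expf_card. Qed.

Lemma expf_card_pow2_subn1 (x : F) : x ^+ (2 ^ n - 1) = (x != 0)%:R.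
Proof.
have [-> | x_n0] := eqVneq x 0.
  by rewrite expr0n subn_eq0 leqNgt -cardF finNzRing_gt1.
by apply: (mulfI x_n0); rewrite -exprS subn1 prednK ?expn_gt0 // expf_card_pow2 mulr1.
Qed.

Lemma expr_pow2_fixed_coprime j (x : F) : coprime n j ->
  x ^+ (2 ^ j) = x -> (x == 0) || (x == 1).
Proof.
move=> co_nj fx.
have := expr_pow_fixed_gcd card_pow2_exp_gt0 (expf_card_pow2 x) fx.
rewrite (eqP co_nj) expn1 => x2.
by rewrite -[x == 1]subr_eq0 -mulf_eq0 mulrBr mulr1 -expr2 x2 subrr.
Qed.

Section GoldExponent.
Variable k : nat.
Hypothesis coprime_nk : coprime n k.

Lemma gold_ratio_eq (u v : F) : u != 0 -> v != 0 ->
  u ^+ (2 ^ k) * v = u * v ^+ (2 ^ k) -> u = v.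
Proof.
move=> u_n0 v_n0 e; apply: divr1_eq.
have fixed : (u / v) ^+ (2 ^ k) = u / v.
  by apply/eqP; rewrite expr_div_n eqr_div ?expf_neq0 // e.
have /orP[/eqP uv0 | /eqP //] := expr_pow2_fixed_coprime coprime_nk fixed.
by move/eqP: uv0; rewrite mulf_eq0 invr_eq0 (negPf u_n0) (negPf v_n0).
Qed.

Lemma gold_kernel_le1 (A B : F) : (A != 0) || (B != 0) ->
  (#|[set u : F | u != 0 & A * u + B * u ^+ (2 ^ k) == 0]%R| <= 1)%N.
Proof.
move=> AB; apply/card_le1_eqP => v u; rewrite !inE.
move=> /andP[v_n0 /eqP kv] /andP[u_n0 /eqP ku].
have B_n0 : B != 0.
  apply: contraTneq AB => B0; move/eqP: ku; rewrite B0 mul0r addr0 mulf_eq0.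
  by rewrite (negPf u_n0) orbF => /eqP ->; rewrite eqxx.
have Bu : B * u ^+ (2 ^ k) = - (A * u) by apply/eqP; rewrite -addr_eq0 addrC ku.
have Bv : B * v ^+ (2 ^ k) = - (A * v) by apply/eqP; rewrite -addr_eq0 addrC kv.
apply: (gold_ratio_eq u_n0 v_n0); apply: (mulfI B_n0).
by rewrite [LHS]mulrA Bu [RHS]mulrCA Bv; ring.
Qed.

Lemma affine_gold_roots_le2 (d A B : F) : d != 0 ->
  (#|[set w : F | d + A * w + B * w ^+ (2 ^ k) == 0]%R| <= 2)%N.
Proof.
move=> d_n0; apply: card_le_succ => w1; rewrite inE => /eqP root_w1.
have AB : (A != 0) || (B != 0).
  by apply: contra_neqT d_n0; rewrite negb_or !negbK => /andP[/eqP A0 /eqP B0];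
    rewrite -root_w1 A0 B0 !mul0r !addr0.
apply: (leq_trans _ (gold_kernel_le1 AB)).
apply: (leq_trans _ (leq_imset_card (fun u => u + w1) _)).
apply/subset_leq_card/subsetP => w; rewrite !inE => /andP[w_w1 /eqP root_w].
apply/imsetP; exists (w - w1); last by rewrite subrK.
rewrite inE subr_eq0 w_w1 /= exprB_pow2 //; apply/eqP.
transitivity ((d + A * w + B * w ^+ (2 ^ k)) - (d + A * w1 + B * w1 ^+ (2 ^ k))).
  by ring.
by rewrite root_w root_w1 subrr.
Qed.

Lemma gold_cdiff_roots_le3 (a c b : F) : c != 1 ->
  (#|[set x : F | gold_cdiff k a c x == b]%R| <= 3)%N.
Proof.
move=> c_n1; apply: card_le_succ => x0; rewrite inE => /eqP root_x0.
set A := x0 + a + c * x0; set B := (x0 + a) ^+ (2 ^ k) + c * x0 ^+ (2 ^ k).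
have c1_n0 : 1 + c != 0 by rewrite -[c](oppr_pchar2 pcharF2) subr_eq0 eq_sym.
apply: (leq_trans _ (affine_gold_roots_le2 A B c1_n0)).
apply: (leq_trans _ (leq_imset_card (fun w => w^-1 + x0) _)).
apply/subset_leq_card/subsetP => x; rewrite !inE => /andP[x_x0 /eqP root_x].
apply/imsetP; exists (x - x0)^-1; last by rewrite invrK subrK.
have z_n0 : x - x0 != 0 by rewrite subr_eq0.
have : (1 + c) * gold k (x - x0) + A * (x - x0) ^+ (2 ^ k) + B * (x - x0) = 0.
  apply: (addrI b); rewrite addr0 -{1}root_x0 -gold_cdiff_shift //.
  by rewrite subrKC root_x.
rewrite inE goldE exprVn; move: (x - x0) z_n0 => z z_n0 E.
have zq_n0 : z ^+ (2 ^ k) != 0 by rewrite expf_neq0.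
apply/eqP; rewrite -(mul0r ((z ^+ (2 ^ k))^-1 * z^-1)) -E.
by move: (z ^+ (2 ^ k)) zq_n0 => Z Z_n0; field; rewrite Z_n0 z_n0.
Qed.

Hypothesis odd_n : odd n.

Lemma gold_inj : injective (@gold F k).
Proof.
move=> u v; have [-> | v_n0] := eqVneq v 0.
  by rewrite /gold !expr0n addn1 => /eqP; rewrite expf_eq0 => /andP[_ /eqP].
rewrite /gold => e; apply: divr1_eq.
have t_gold : (u / v) ^+ (2 ^ k) * (u / v) = 1.
  by rewrite -goldE /gold expr_div_n e divff ?expf_neq0.
set t := u / v in t_gold *.
have t_n0 : t != 0 by apply: contra_eq_neq t_gold => ->; rewrite mulr0 eq_sym oner_neq0.
have tq : t ^+ (2 ^ k) = t^-1 by apply: (mulIf t_n0); rewrite t_gold mulVf.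
have fixed : t ^+ (2 ^ (k + k)) = t by rewrite expnD exprM tq exprVn tq invrK.
have co : coprime n (k + k).
  by rewrite addnn -muln2 coprimeMr coprime_nk coprimen2 odd_n.
have /orP[/eqP t0 | /eqP //] := expr_pow2_fixed_coprime co fixed.
by rewrite t0 eqxx in t_n0.
Qed.

End GoldExponent.

End FiniteFieldCharTwo.

Section Subfield.
Variables (F : finFieldType) (s m k : nat).
Hypothesis cardF : #|F| = (2 ^ (s * m))%N.
Hypothesis odd_n : odd (s * m).
Hypothesis coprime_nk : coprime (s * m) k.

Let pcharF2 : 2 \in [pchar F] := card_finPcharP cardF (isT : prime 2).

Let odd_m : odd m.
Proof. by move: odd_n; rewrite oddM => /andP[]. Qed.

Lemma in_sub1 : in_sub s (1 : F).
Proof. by rewrite /in_sub expr1n. Qed.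

Lemma in_subD (x y : F) : in_sub s x -> in_sub s y -> in_sub s (x + y).
Proof. by rewrite /in_sub exprD_pow2 // => /eqP -> /eqP ->. Qed.

Lemma in_subM (x y : F) : in_sub s x -> in_sub s y -> in_sub s (x * y).
Proof. by rewrite /in_sub exprMn => /eqP -> /eqP ->. Qed.

Lemma in_subDr (x a : F) : in_sub s a -> in_sub s (x + a) = in_sub s x.
Proof.
move=> Ka; apply/idP/idP => [Kxa | Kx]; last exact: in_subD.
by rewrite -(addrK_pchar2 pcharF2 a x) in_subD.
Qed.

Lemma in_sub_coprime d (x : F) : coprime m d ->
  x ^+ (2 ^ (s * d)) = x -> in_sub s x.
Proof.
move=> co_md fx; apply/eqP.
have := expr_pow_fixed_gcd (card_pow2_exp_gt0 cardF) (expf_card_pow2 cardF x) fx.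
by rewrite -muln_gcdr (eqP co_md) muln1.
Qed.

Lemma in_sub_add_frob (a : F) : in_sub s (a + a ^+ (2 ^ s)) -> in_sub s a.
Proof.
rewrite /in_sub exprD_pow2 // -exprM -expnD addnn -muln2 => /eqP e.
apply: (in_sub_coprime (d := 2)); first by rewrite coprimen2.
by apply: (addrI (a ^+ (2 ^ s))); rewrite e addrC.
Qed.

Lemma gold_cdiff_frob (a c x : F) : in_sub s a -> in_sub s c ->
  gold_cdiff k a c x ^+ (2 ^ s) = gold_cdiff k a c (x ^+ (2 ^ s)).
Proof.
move=> /eqP Ka /eqP Kc.
by rewrite /gold_cdiff exprD_pow2 // exprMn Kc !gold_exprAC exprD_pow2 // Ka.
Qed.

Lemma in_sub_gold_cdiff (a c x : F) : in_sub s a -> in_sub s c -> in_sub s x ->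
  in_sub s (gold_cdiff k a c x).
Proof. by move=> Ka Kc /eqP Kx; rewrite /in_sub gold_cdiff_frob // Kx. Qed.

Lemma gold_cdiff_root_in_sub (a c b x : F) : ~~ (3 %| m)%N -> c != 1 ->
  in_sub s a -> in_sub s c -> in_sub s b -> gold_cdiff k a c x = b -> in_sub s x.
Proof.
move=> m3 c_n1 Ka Kc Kb root_x; apply/negPn/negP => nKx.
pose y i := x ^+ (2 ^ (s * i)).
have root_y i : gold_cdiff k a c (y i) = b.
  elim: i => [|i IHi]; first by rewrite /y muln0 expr1.
  by rewrite /y mulnSr expnD exprM -gold_cdiff_frob // IHi (eqP Kb).
have y_neq i j : (i < j < i + 4)%N -> y i != y j.
  case/andP=> lt_ij; have d_gt0 : (0 < j - i)%N by rewrite subn_gt0.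
  rewrite -(subnKC (ltnW lt_ij)) ltn_add2l => d_lt4.
  apply: contra nKx => /eqP e; apply: (in_sub_coprime (d := (j - i)%N)).
    move: (j - i)%N d_gt0 d_lt4 => [|[|[|[|]]]] //= _ _; rewrite ?coprimen1 ?coprimen2 //.
    by rewrite coprime_sym prime_coprime.
  apply: (expr_pow2_inj pcharF2 (j := (s * i)%N)); rewrite /= -exprM -expnD -mulnDr addnC.
  exact/esym.
have : (4 <= #|[set z : F | gold_cdiff k a c z == b]%R|)%N.
  rewrite cardE; apply: (uniq_leq_size (s1 := [:: y 0; y 1; y 2; y 3]%N)).
    by rewrite /= !inE !negb_or !y_neq.
  move=> z z_y; rewrite mem_enum inE; move: z_y; rewrite !inE.
  by case/or4P=> /eqP ->; rewrite root_y.
by rewrite leqNgt ltnS (gold_cdiff_roots_le3 cardF coprime_nk a b c_n1).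
Qed.

Lemma gold_comb_inj_in_sub (a c1 c2 u v : F) : ~~ in_sub s a ->
  in_sub s c1 -> in_sub s c2 -> (c1 != 0) || (c2 != 0) ->
  in_sub s u -> in_sub s v ->
  c1 * gold k (u + a) + c2 * gold k u = c1 * gold k (v + a) + c2 * gold k v ->
  u = v.
Proof.
move=> nKa Kc1 Kc2 c12 Ku Kv.
pose Q b w := c1 * gold k (w + b) + c2 * gold k w; rewrite -/(Q a u) -/(Q a v) => eQ.
have [c1_0 | c1_n0] := eqVneq c1 0.
  move: eQ c12; rewrite /Q c1_0 !mul0r !add0r eqxx /= => eQ c2_n0.
  exact: (gold_inj cardF coprime_nk odd_n (mulfI c2_n0 eQ)).
set a' := a ^+ (2 ^ s).
have Q_frob w : in_sub s w -> Q a w ^+ (2 ^ s) = Q a' w.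
  move=> /eqP Kw; rewrite /Q exprD_pow2 // !exprMn (eqP Kc1) (eqP Kc2).
  by rewrite !gold_exprAC exprD_pow2 // Kw.
have eQ' : Q a' u = Q a' v by rewrite -!Q_frob // eQ.
have key : c1 * ((u - v) ^+ (2 ^ k) * (a - a') + (u - v) * (a - a') ^+ (2 ^ k)) = 0.
  rewrite !exprB_pow2 //; transitivity ((Q a u - Q a' u) - (Q a v - Q a' v)).
    by rewrite /Q !goldD //; ring.
  by rewrite eQ eQ' subrr.
apply/subr0_eq/eqP/negPn/negP => uv_n0.
have e_n0 : a - a' != 0 by apply: contra nKa; rewrite subr_eq0 eq_sym.
move/eqP: key; rewrite mulf_eq0 (negPf c1_n0) /= addr_eq0 => /eqP.
rewrite [- (_ * _)](oppr_pchar2 pcharF2).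
move=> /(gold_ratio_eq cardF coprime_nk uv_n0 e_n0) uv_e.
apply: (negP nKa); apply: in_sub_add_frob.
rewrite -[_ ^+ (2 ^ s)](oppr_pchar2 pcharF2) -uv_e.
by apply: in_subD; rewrite ?(oppr_pchar2 pcharF2).
Qed.

Lemma GfunE (alpha x : F) :
  Gfun (s * m) s k alpha x = gold k x + (if in_sub s x then alpha else 0).
Proof.
rewrite /Gfun /in_sub -subr_eq0 (oppr_pchar2 pcharF2).
have [-> | y_n0] := eqVneq (x ^+ (2 ^ s) + x) 0.
  by rewrite expf_card_pow2_subn1 // eqxx mulr0 addr0.
by rewrite expf_card_pow2_subn1 // y_n0 mulr1 -addrA addrr_pchar2 // addr0.
Qed.

Section CDifferential.
Variables (alpha c : F).
Hypotheses (Kalpha : in_sub s alpha) (Kc : in_sub s c) (c_n1 : c != 1).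

Let G := Gfun (s * m) s k alpha.

Lemma cdiff_GfunE a x : G (x + a) - c * G x = gold_cdiff k a c x
  + (if in_sub s (x + a) then alpha else 0) + c * (if in_sub s x then alpha else 0).
Proof. by rewrite /G !GfunE (oppr_pchar2 pcharF2) /gold_cdiff; ring. Qed.

Lemma cdiff_Gfun_in_sub a x : in_sub s a -> G (x + a) - c * G x =
  gold_cdiff k a c x + (if in_sub s x then alpha + c * alpha else 0).
Proof.
move=> Ka; rewrite cdiff_GfunE in_subDr //.
by case: (in_sub s x); rewrite ?mulr0 ?addr0 // addrA.
Qed.

Lemma cDelta_Gfun_in_sub_le6 a b : in_sub s a -> (cDelta G c a b <= 6)%N.
Proof.
move=> Ka; set t := alpha + c * alpha.
have le3 b' := gold_cdiff_roots_le3 cardF coprime_nk a b' c_n1.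
apply: leq_trans (leq_add (le3 (b - t)) (le3 b)).
apply: leq_trans (leq_card_setU _ _); apply/subset_leq_card/subsetP => x.
rewrite !inE cdiff_Gfun_in_sub //; case: (in_sub s x) => /eqP <-.
  by rewrite addrK eqxx.
by rewrite addr0 eqxx orbT.
Qed.

Lemma cDelta_Gfun_in_sub_le3 a b : ~~ (3 %| m)%N -> in_sub s a ->
  (cDelta G c a b <= 3)%N.
Proof.
move=> m3 Ka; set t := alpha + c * alpha.
have Kt : in_sub s t by rewrite in_subD ?in_subM.
have le3 b' := gold_cdiff_roots_le3 cardF coprime_nk a b' c_n1.
have [Kb | nKb] := boolP (in_sub s b).
  apply: leq_trans (le3 (b - t)); apply/subset_leq_card/subsetP => x.
  rewrite !inE cdiff_Gfun_in_sub //.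
  case: ifP => [_ /eqP <- | nKx]; first by rewrite addrK.
  by rewrite addr0 => /eqP /(gold_cdiff_root_in_sub m3 c_n1 Ka Kc Kb); rewrite nKx.
apply: leq_trans (le3 b); apply/subset_leq_card/subsetP => x.
rewrite !inE cdiff_Gfun_in_sub //.
case: ifP => [Kx /eqP root_x | _]; last by rewrite addr0.
by rewrite -root_x in_subD ?in_sub_gold_cdiff in nKb.
Qed.

Lemma cDelta_Gfun_notin_sub_le5 a b : ~~ in_sub s a -> (cDelta G c a b <= 5)%N.
Proof.
move=> nKa; rewrite /cDelta; set S := [set x | _].
have notin_shift x : in_sub s x -> in_sub s (x + a) = false.
  by move=> Kx; rewrite addrC in_subDr // (negPf nKa).
have le1_in : (#|[set x in S | in_sub s x]| <= 1)%N.
  apply/card_le1_eqP => y x; rewrite !inE !cdiff_GfunE.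
  move=> /andP[/eqP ey Ky] /andP[/eqP ex Kx].
  move: ex ey; rewrite Kx Ky (notin_shift x Kx) (notin_shift y Ky) !addr0 => ex ey.
  apply: (gold_comb_inj_in_sub nKa in_sub1 Kc _ Kx Ky); first by rewrite oner_neq0.
  by rewrite !mul1r; apply: (addIr (c * alpha)); exact: etrans ex (esym ey).
have le1_shift : (#|[set x in S | in_sub s (x + a)]%R| <= 1)%N.
  apply/card_le1_eqP => y x; rewrite !inE !cdiff_GfunE.
  move=> /andP[/eqP ey Ky] /andP[/eqP ex Kx]; apply: (addIr a).
  have nK z : in_sub s (z + a) -> in_sub s z = false.
    by move=> Kz; rewrite -[z](addrK_pchar2 pcharF2 a) notin_shift.
  move: ex ey; rewrite Kx Ky (nK x Kx) (nK y Ky) mulr0 !addr0 => ex ey.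
  apply: (gold_comb_inj_in_sub nKa Kc in_sub1 _ Kx Ky); first by rewrite oner_neq0 orbT.
  rewrite !(addrK_pchar2 pcharF2 a) !mul1r [LHS]addrC [RHS]addrC.
  by apply: (addIr alpha); exact: etrans ex (esym ey).
have le3 := gold_cdiff_roots_le3 cardF coprime_nk a b c_n1.
apply: leq_trans (leq_add (leq_add le1_in le1_shift) le3).
apply: leq_trans (leq_add (leq_card_setU _ _) (leqnn _)).
apply: leq_trans (leq_card_setU _ _); apply/subset_leq_card/subsetP => x Sx.
rewrite !inE in Sx *; rewrite Sx /=.
case Kx: (in_sub s x) => //; case Kxa: (in_sub s (x + a)) => //=.
by move: Sx; rewrite cdiff_GfunE Kx Kxa mulr0 !addr0.
Qed.

End CDifferential.

End Subfield.

Theorem theorem2p14 (s m k : nat) (F : finFieldType) (alpha : F) :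
  (0 < s)%N -> (0 < m)%N -> odd (s * m) -> (0 < k)%N -> coprime (s * m) k ->
  #|F| = (2 ^ (s * m))%N ->
  in_sub s alpha -> alpha != 0 ->
  (forall c : F, in_sub s c -> c != 1 ->
     (cDU (Gfun (s * m) s k alpha) c <= 6)%N) /\
  (~~ (3 %| m)%N -> forall c : F, in_sub s c -> c != 1 ->
     (cDU (Gfun (s * m) s k alpha) c <= 5)%N).
Proof.
move=> _ _ odd_n _ co_nk cardF Kalpha _.
have le5 c a b : in_sub s c -> c != 1 -> ~~ in_sub s a ->
    (cDelta (Gfun (s * m) s k alpha) c a b <= 5)%N.
  by move=> Kc c_n1; apply: (cDelta_Gfun_notin_sub_le5 cardF odd_n co_nk alpha Kc c_n1).
split=> [c Kc c_n1 | m3 c Kc c_n1]; apply/bigmax_leqP => -[a b] _ /=;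
  have [Ka | nKa] := boolP (in_sub s a).
- exact: (cDelta_Gfun_in_sub_le6 cardF co_nk alpha c_n1 b Ka).
- exact: leq_trans (le5 c a b Kc c_n1 nKa) _.
- exact: leq_trans (cDelta_Gfun_in_sub_le3 cardF odd_n co_nk Kalpha Kc c_n1 b m3 Ka) _.
- exact: le5.
Qed.
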